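(* Consider $2$ agents with additive, normalized (not necessarily identical) valuations, and online algorithms without access to predictions. For any given $a\in(0,1]$, there is no online algorithm that guarantees an $a$-EFX allocation, even if the time horizon $T$ is known to the algorithm in advance.
   Context: Online fair division model: there is a set $N=[n]$ of agents and goods $g_1,\dots,g_T$ arriving one per time step. Each agent $i$ has an additive normalized valuation $v_i$ ($v_i(g_t)\ge0$, $\sum_{t=1}^T v_i(g_t)=1$, $v_i(S)=\sum_{g\in S}v_i(g)$). When $g_t$ arrives, the values $v_i(g_t)$ of all agents are revealed and $g_t$ must be immediately and irrevocably allocated to one agent. For a bundle $S\ne\emptyset$ and valuation $f$, $\bar S^f=S\setminus\{g\}$ with $g\in\arg\max_{g'\in S}f(S\setminus\{g'\})$, and $\bar\emptyset^f=\emptyset$. For $a\in[0,1]$, an allocation $(A_1,\dots,A_n)$ is $a$-EFX if $v_i(A_i)\ge a\cdot v_i(\bar{A_j}^{v_i})$ for all $i,j$. An algorithm guarantees an $a$-EFX allocation if for every admissible input the final allocation is $a$-EFX with respect to the true valuations. *)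

From mathcomp Require Import all_boot all_order all_algebra.
From mathcomp Require Import reals.
Set Implicit Arguments. Unset Strict Implicit. Unset Printing Implicit Defensive.
Import Order.TTheory GRing.Theory Num.Theory.
Local Open Scope ring_scope.

Section OnlineFairDivision.
Variables (R : realType) (n T : nat).

(* An input: v i t = value of good g_{t+1} (t = 0, ..., T-1) for agent i. *)
Definition instance := 'I_n -> nat -> R.

Definition admissible (v : instance) : Prop :=
  (forall (i : 'I_n) (t : 'I_T), 0 <= v i t) /\
  (forall i : 'I_n, \sum_(t < T) v i t = 1).

Definition val (v : instance) (i : 'I_n) (S : {set 'I_T}) : R :=
  \sum_(t in S) v i t.

Definition bar (f : {set 'I_T} -> R) (S : {set 'I_T}) : {set 'I_T} :=
  match [pick g in S] with
  | Some g0 => S :\ Order.arg_max g0 (fun g => g \in S) (fun g => f (S :\ g))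
  | None => set0
  end.

Definition aEFX (a : R) (v : instance) (A : 'I_n -> {set 'I_T}) : Prop :=
  forall i j : 'I_n, val v i (A i) >= a * val v i (bar (val v i) (A j)).

(* A (deterministic) online algorithm for horizon T: when good t arrives, it
   sees the values of all goods 0..t for all agents (the history) and outputs
   the agent receiving good t. *)
Definition online_alg := seq ('I_n -> R) -> 'I_n.

Definition history (v : instance) (t : nat) : seq ('I_n -> R) :=
  mkseq (fun s => fun i => v i s) t.+1.

Definition run (alg : online_alg) (v : instance) : 'I_n -> {set 'I_T} :=
  fun j => [set t : 'I_T | alg (history v t) == j].

End OnlineFairDivision.

From Pilot Require Import Defs.
From mathcomp Require Import all_boot all_order all_algebra.
From mathcomp Require Import boolp reals ring lra.
Import Order.TTheory GRing.Theory Num.Theory.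
Local Open Scope ring_scope.

Set Implicit Arguments. Unset Strict Implicit. Unset Printing Implicit Defensive.

(* The adversary first shows a good that both agents value at 0; call j0 the
   agent who receives it and i0 the other one. In the instance W_s, agent i0
   values goods 1..s at 1/m each and good s+1 at the remainder 1 - s/m, while
   j0 values only good s+1. The instances W_s coincide on goods 0..s, so up to
   round s the algorithm behaves on W_s as on W_m. Let s be the first good in
   1..m that i0 receives in W_m. If there is none, i0 ends with value 0 while
   j0's bundle without the worthless good is worth 1 to i0. Otherwise play W_s:
   if i0 also receives good s+1, then j0 has value 0 but values i0's bundle
   without good s at 1; if j0 receives it, i0 has value at most 1/m while j0's
   bundle without good 0 is worth at least 1 - 1/m to i0. Since a zero-valued
   good may always be the one removed in the EFX comparison, each case violates
   a-EFX as soon as 1/m < a (1 - 1/m). *)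

Section Bundles.
Variables (R : realType) (n T : nat) (v : instance R n) (i : 'I_n).

Lemma val_setD1 (S : {set 'I_T}) t :
  t \in S -> Defs.val v i S = v i t + Defs.val v i (S :\ t).
Proof.
move=> tS; rewrite /Defs.val (bigD1 t) //=; congr (_ + _).
by apply: eq_bigl => u; rewrite in_setD1 andbC.
Qed.

Lemma val_setC (S : {set 'I_T}) :
  Defs.val v i (~: S) = \sum_(t < T) v i t - Defs.val v i S.
Proof.
rewrite /Defs.val [X in X - _](bigID (fun t => t \in S)) /= addrAC subrr add0r.
by apply: eq_bigl => t; rewrite inE.
Qed.

Lemma val_le_bar (S : {set 'I_T}) t :
  t \in S -> Defs.val v i (S :\ t) <= Defs.val v i (bar (Defs.val v i) S).
Proof.
move=> tS; rewrite /bar; case: pickP => [g0 g0S|/(_ t)]; last by rewrite tS.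
by case: arg_maxP => // g _; apply.
Qed.

Lemma val_le_point (S : {set 'I_T}) (t0 : 'I_T) :
  0 <= v i t0 -> (forall t, t \in S -> t != t0 -> v i t = 0) ->
  Defs.val v i S <= v i t0.
Proof.
move=> ge0 zero; have [t0S|t0S] := boolP (t0 \in S).
  rewrite (val_setD1 t0S) /Defs.val big1 ?addr0 // => t.
  by rewrite in_setD1 => /andP[/zero].
rewrite /Defs.val big1 // => t tS; apply: zero => //.
by apply: contraNneq t0S => <-.
Qed.

Lemma not_aEFX_of_zero_good (a b : R) (A : 'I_n -> {set 'I_T}) j z :
  0 < a -> z \in A j -> v i z = 0 ->
  Defs.val v i (A i) <= b -> 1 - b <= Defs.val v i (A j) -> b < a * (1 - b) ->
  ~ aEFX a v A.
Proof.
move=> a_gt0 zA vz own other ab /(_ i j) efx.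
have barA := val_le_bar zA; rewrite (val_setD1 zA) vz add0r in other.
have : a * (1 - b) <= a * Defs.val v i (bar (Defs.val v i) (A j)).
  by rewrite ler_pM2l //; apply: le_trans other barA.
lra.
Qed.

End Bundles.

Section TwoAgents.
Variables (R : realType) (T : nat) (alg : online_alg R 2).

Lemma history_eq n (v w : instance R n) t :
  (forall k u, (u <= t)%N -> v k u = w k u) -> history v t = history w t.
Proof.
move=> vw; apply/eq_in_map => u; rewrite mem_iota ltnS => /andP[_ ut].
by apply/funext => k; apply: vw.
Qed.

Lemma mem_run v j (t : 'I_T) : (t \in run T alg v j) = (alg (history v t) == j).
Proof. by rewrite inE. Qed.

Lemma ord2_other (i j k : 'I_2) : i != j -> k != i -> k = j.
Proof.
by case: i j k => [[|[|//]] ?] [[|[|//]] ?] [[|[|//]] ?] //= _ _; apply/val_inj.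
Qed.

Lemma run2_setC v (i j : 'I_2) : i != j -> run T alg v j = ~: run T alg v i.
Proof.
move=> ij; apply/setP => t; rewrite !inE.
have [->|ki] := eqVneq (alg (history v t)) i; first by rewrite (negbTE ij).
by rewrite (ord2_other ij ki) eqxx.
Qed.

Lemma not_aEFX_run2 (a b : R) v (i j : 'I_2) (z : 'I_T) :
  0 < a -> admissible T v -> i != j -> z \in run T alg v j -> v i z = 0 ->
  Defs.val v i (run T alg v i) <= b -> b < a * (1 - b) ->
  ~ aEFX a v (run T alg v).
Proof.
move=> a_gt0 [_ sum1] ij zA vz own.
have other : 1 - b <= Defs.val v i (run T alg v j).
  by rewrite (run2_setC _ ij) val_setC sum1; lra.
exact: not_aEFX_of_zero_good zA vz own other.
Qed.

End TwoAgents.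

Section HardInstance.
Variables (R : realType) (m : nat).

Definition spread (s t : nat) : R :=
  if (0 < t <= s)%N then m%:R^-1
  else if t == s.+1 then 1 - s%:R / m%:R else 0.

Definition spike (s t : nat) : R := if t == s.+1 then 1 else 0.

Definition hard_instance (i : 'I_2) (s : nat) : instance R 2 :=
  fun k t => if k == i then spread s t else spike s t.

Lemma hard_instance_self i s t : hard_instance i s i t = spread s t.
Proof. by rewrite /hard_instance eqxx. Qed.

Lemma hard_instance_other i k s t : k != i -> hard_instance i s k t = spike s t.
Proof. by rewrite /hard_instance => /negbTE ->. Qed.

Lemma spread0 s : spread s 0 = 0.
Proof. by rewrite /spread. Qed.

Lemma spread_mid s t : (0 < t <= s)%N -> spread s t = m%:R^-1.
Proof. by rewrite /spread => ->. Qed.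

Lemma spread_next s : spread s s.+1 = 1 - s%:R / m%:R.
Proof. by rewrite /spread ltnn andbF eqxx. Qed.

Lemma spread_high s t : (s.+1 < t)%N -> spread s t = 0.
Proof.
by move=> st; rewrite /spread gtn_eqF // (leqNgt t s) (ltnW st) andbF.
Qed.

Lemma history_hard_instance0 i s : history (hard_instance i s) 0 = [:: fun=> 0].
Proof.
congr [:: _]; apply/funext => k.
by rewrite /hard_instance spread0; case: (k == i).
Qed.

Hypothesis m_gt0 : (0 < m)%N.

Lemma spread_ge0 s t : (s <= m)%N -> 0 <= spread s t.
Proof.
move=> sm; rewrite /spread; case: ifP => _; first by rewrite invr_ge0.
case: ifP => // _; rewrite subr_ge0 ler_pdivrMr ?ltr0n // mul1r ler_nat //.
Qed.

Lemma sum_spread s : (s <= m)%N -> \sum_(t < m.+2) spread s t = 1.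
Proof.
move=> sm.
have low : \sum_(1 <= t < s.+1) spread s t = s%:R / m%:R.
  rewrite (eq_big_nat _ _ (F2 := fun=> m%:R^-1)) => [|t /spread_mid //].
  by rewrite sumr_const_nat subSS subn0 mulr_natl.
have high : \sum_(s.+2 <= t < m.+2) spread s t = 0.
  by rewrite big_nat_cond big1 // => t /andP[/andP[st _] _]; apply: spread_high.
rewrite -(big_mkord xpredT (spread s)) (big_cat_nat _ (n := s.+1)) //=; last first.
  by rewrite !ltnS ltnW.
rewrite big_ltn // (@big_ltn _ _ _ s.+1) ?ltnS // spread0 spread_next low high.
by rewrite add0r addr0 addrCA subrr addr0.
Qed.

Lemma sum_spike s : (s <= m)%N -> \sum_(t < m.+2) spike s t = 1.
Proof.
move=> sm; have s1_lt : (s.+1 < m.+2)%N by rewrite !ltnS.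
by rewrite -big_mkcond (big_pred1 (Ordinal s1_lt)).
Qed.

Lemma hard_instance_admissible i s :
  (s <= m)%N -> admissible m.+2 (hard_instance i s).
Proof.
move=> sm; split=> [k t|k]; rewrite /hard_instance; case: (k == i).
- exact: spread_ge0.
- by rewrite /spike; case: ifP.
- exact: sum_spread.
- exact: sum_spike.
Qed.

Lemma hard_instance_prefix i s k u :
  (u <= s <= m)%N -> hard_instance i s k u = hard_instance i m k u.
Proof.
case/andP=> us sm; rewrite /hard_instance /spike /spread.
have um := leq_trans us sm.
by rewrite !(ltn_eqF (leq_ltn_trans _ (ltnSn _))) // us um.
Qed.

Lemma history_hard_instance i s t :
  (t <= s <= m)%N ->
  history (hard_instance i s) t = history (hard_instance i m) t.
Proof.
case/andP=> ts sm; apply: history_eq => k u ut.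
by apply: hard_instance_prefix; rewrite (leq_trans ut ts).
Qed.

End HardInstance.

Lemma exists_hard_size (R : realType) (a : R) :
  0 < a -> exists2 m : nat, (0 < m)%N & m%:R^-1 < a * (1 - m%:R^-1).
Proof.
move=> a_gt0; set x := a^-1 * (1 + a).
have x_gt0 : 0 < x by rewrite mulr_gt0 ?invr_gt0 //; lra.
have xm := archi_boundP (ltW x_gt0); set m := Num.bound x in xm.
have m_gt0 : 0 < m%:R :> R by apply: lt_trans xm.
exists m; first by rewrite -(ltr0n R).
have am : 1 + a < a * m%:R.
  by rewrite -(ltr_pM2l a_gt0) mulrA mulfV ?gt_eqF // mul1r in xm.
rewrite -subr_gt0 (_ : _ - _ = (a * m%:R - a - 1) / m%:R); last first.
  by field; rewrite gt_eqF.
by rewrite divr_gt0 //; lra.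
Qed.

Section Adversary.
Variables (R : realType) (a : R) (m : nat).
Variables (alg : online_alg R 2) (i0 j0 : 'I_2).
Hypotheses (a_gt0 : 0 < a) (m_gt0 : (0 < m)%N).
Hypothesis m_large : m%:R^-1 < a * (1 - m%:R^-1).
Hypotheses (i0j0 : i0 != j0) (first_to_j0 : alg [:: fun=> 0] = j0).

Local Notation inst := (hard_instance R m i0).
Local Notation alloc s := (run m.+2 alg (inst s)).

Definition i0_takes (t : nat) : bool :=
  (0 < t <= m)%N && (alg (history (inst m) t) == i0).

Lemma alloc_i0_pos s (t : 'I_m.+2) : t \in alloc s i0 -> (0 < t)%N.
Proof.
rewrite mem_run lt0n; apply: contraTneq => ->.
by rewrite history_hard_instance0 first_to_j0 eq_sym.
Qed.

Lemma alloc_j0 s : alloc s j0 = ~: alloc s i0.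
Proof. exact: run2_setC. Qed.

Lemma good0_alloc_j0 s : (ord0 : 'I_m.+2) \in alloc s j0.
Proof. by rewrite mem_run history_hard_instance0 first_to_j0. Qed.

Lemma never_takes_violation :
  ~ (exists t, i0_takes t) -> ~ aEFX a (inst m) (alloc m).
Proof.
move=> no_take.
have last0 : inst m i0 (@ord_max m.+1) = 0.
  by rewrite hard_instance_self spread_next divff ?subrr // pnatr_eq0 -lt0n.
apply: (not_aEFX_run2 (b := 0) a_gt0 _ i0j0 (good0_alloc_j0 m)).
- exact: hard_instance_admissible.
- by rewrite hard_instance_self spread0.
- rewrite -last0; apply: val_le_point => [|t ti0 t_max]; first by rewrite last0.
  have t_le : (t <= m)%N.
    have := ltn_ord t; rewrite ltnS leq_eqVlt => /orP[/eqP t_eq|//].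
    by case/eqP: t_max; apply: val_inj.
  case: no_take; exists t.
  by rewrite /i0_takes (alloc_i0_pos ti0) t_le -mem_run.
- by rewrite subr0 mulr1.
Qed.

Section FirstTake.
Variable s : nat.
Hypothesis takes_s : i0_takes s.
Hypothesis first_s : forall t, i0_takes t -> (s <= t)%N.

Let s_le : (s <= m)%N. Proof. by case/andP: takes_s => /andP[]. Qed.
Let gs : 'I_m.+2 := Ordinal (leq_trans s_le (leqnSn m.+1) : (s < m.+2)%N).
Let gs1 : 'I_m.+2 := Ordinal (s_le : (s.+1 < m.+2)%N).

Lemma decision_prefix t :
  (t <= s)%N -> alg (history (inst s) t) = alg (history (inst m) t).
Proof. by move=> ts; rewrite history_hard_instance // ts s_le. Qed.

Lemma first_take_alloc : gs \in alloc s i0.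
Proof. by rewrite mem_run decision_prefix //; case/andP: takes_s. Qed.

Lemma next_to_i0_violation : gs1 \in alloc s i0 -> ~ aEFX a (inst s) (alloc s).
Proof.
move=> next; have j0i0 : j0 != i0 by rewrite eq_sym.
apply: (not_aEFX_run2 (b := 0) (z := gs) a_gt0 _ j0i0 first_take_alloc).
- exact: hard_instance_admissible.
- by rewrite hard_instance_other // /spike /gs /= ltn_eqF.
- have zero0 : inst s j0 (ord0 : 'I_m.+2) = 0 by rewrite hard_instance_other.
  rewrite -zero0; apply: val_le_point => [|t tj0 _]; first by rewrite zero0.
  rewrite hard_instance_other // /spike ifN //; apply: contraTneq tj0 => t_next.
  by rewrite alloc_j0 inE negbK (_ : t = gs1) //; apply: val_inj.
- by rewrite subr0 mulr1.
Qed.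

Lemma next_to_j0_violation : gs1 \in alloc s j0 -> ~ aEFX a (inst s) (alloc s).
Proof.
move=> next.
apply: (not_aEFX_run2 (b := m%:R^-1) a_gt0 _ i0j0 (good0_alloc_j0 s)) => //.
- exact: hard_instance_admissible.
- by rewrite hard_instance_self spread0.
- have own : inst s i0 gs = m%:R^-1.
    rewrite hard_instance_self spread_mid // /gs /= leqnn andbT.
    by case/andP: takes_s => /andP[].
  rewrite -own; apply: val_le_point => [|t ti0 t_s].
    by rewrite own invr_ge0.
  rewrite hard_instance_self; case: (ltngtP t s) => [t_lt|t_gt|t_eq].
  + have : i0_takes t.
      rewrite /i0_takes (alloc_i0_pos ti0) (leq_trans (ltnW t_lt) s_le).
      by rewrite -decision_prefix ?(ltnW t_lt) // -mem_run.
    by move/first_s; rewrite leqNgt t_lt.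
  + case: (ltngtP t s.+1) => [|t_high|t_next]; first by rewrite ltnS leqNgt t_gt.
      exact: spread_high.
    have gs1_t : gs1 = t by apply: val_inj; rewrite /gs1 /= t_next.
    by move: next; rewrite alloc_j0 inE gs1_t ti0.
  + by case/eqP: t_s; apply: val_inj.
Qed.

Lemma first_take_violation : ~ aEFX a (inst s) (alloc s).
Proof.
have [next|next] := boolP (gs1 \in alloc s i0).
  exact: next_to_i0_violation.
by apply: next_to_j0_violation; rewrite alloc_j0 inE.
Qed.

End FirstTake.
End Adversary.

Theorem theorem3p4 (R : realType) (a : R) (ha : 0 < a) (ha1 : a <= 1)
  (alg : forall T : nat, online_alg R 2) :
  exists (T : nat) (v : instance R 2),
    admissible T v /\ ~ aEFX a v (run T (alg T) v).
Proof.
have [m m_gt0 m_large] := exists_hard_size ha.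
set j0 := alg m.+2 [:: fun=> 0]; set i0 := lift j0 (ord0 : 'I_1).
have i0j0 : i0 != j0 by rewrite eq_sym neq_lift.
have [[t takes_t]|no_take] := pselect (exists t, i0_takes m (alg m.+2) i0 t).
- have [s takes_s first_s] := ex_minnP (ex_intro _ t takes_t).
  exists m.+2, (hard_instance R m i0 s); split.
    by apply: hard_instance_admissible; case/andP: takes_s => /andP[].
  exact: (first_take_violation ha m_gt0 m_large i0j0 erefl takes_s first_s).
- exists m.+2, (hard_instance R m i0 m); split.
    exact: hard_instance_admissible.
  exact: (never_takes_violation ha m_gt0 i0j0 erefl no_take).
Qed.
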